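(* Let $A$ be a $*$-algebra and $V'$ a unitary representation of $A$. Then $\mathrm{Spec}_A(V')$ is a bounded and closed subset of $\widehat A$.
   Context: Conventions: all vector spaces are complex; an algebra is a unital $\mathbb{C}$-algebra and modules are unital. A $*$-algebra is an algebra $A$ with a map $a\mapsto a^*$ satisfying $a^{**}=a$, $(a+b)^*=a^*+b^*$, $(ab)^*=b^*a^*$, $(\alpha a)^*=\bar\alpha a^*$. A unitary representation of $A$ is a Hilbert space $V$ with a left $A$-module structure such that $\langle au,v\rangle=\langle u,a^*v\rangle$ for all $a\in A$, $u,v\in V$, and each operator $a|_V:v\mapsto av$ is bounded. It is irreducible if it has no closed $A$-submodule other than $0$ and $V$. Two unitary representations are isomorphic if there is a continuous $A$-module isomorphism between them. The unitary dual $\widehat A$ is the set of isomorphism classes $[V]$ of irreducible unitary representations. For $[V]\in\widehat A$ and a unitary representation $V'$, write $V\prec V'$ if for every unit vector $v\in V$, every $\varepsilon>0$ and every finite $F\subseteq A$ there is a unit vector $v'\in V'$ with $|\langle av,v\rangle-\langle av',v'\rangle|<\varepsilon$ for all $a\in F$. The $A$-spectrum of $V'$ is $\mathrm{Spec}_A(V')=\{[V]\in\widehat A: V\prec V'\}$. $\widehat A$ is topologized by the subbasis of sets $N_{V,v,\varepsilon,F}$ ($V$ irreducible unitary, $v\in V$ a unit vector, $\varepsilon>0$, $F\subseteq A$ finite) consisting of all $[U]\in\widehat A$ for which there exists $u\in U$ (not necessarily a unit vector) with $|\langle av,v\rangle-\langle au,u\rangle|<\varepsilon$ for all $a\in F$.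 A subset $S\subseteq\widehat A$ is bounded if $\sup_{[V]\in S}\|a|_V\|<\infty$ for every $a\in A$. *)

From Stdlib Require Import Reals List.
Open Scope R_scope.

Record C := mkC { Re : R; Im : R }.
Definition C0 : C := mkC 0 0.
Definition C1 : C := mkC 1 0.
Definition Cplus (a b : C) : C := mkC (Re a + Re b) (Im a + Im b).
Definition Copp (a : C) : C := mkC (- Re a) (- Im a).
Definition Cminus (a b : C) : C := Cplus a (Copp b).
Definition Cmult (a b : C) : C :=
  mkC (Re a * Re b - Im a * Im b) (Re a * Im b + Im a * Re b).
Definition Cconj (a : C) : C := mkC (Re a) (- Im a).
Definition Cmod (a : C) : R := sqrt (Re a * Re a + Im a * Im a).

Record HSpace := {
  hcar :> Type;
  hadd : hcar -> hcar -> hcar;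
  hzero : hcar;
  hopp : hcar -> hcar;
  hscal : C -> hcar -> hcar;
  hinner : hcar -> hcar -> C   (* linear in the first argument *)
}.

Definition hnorm {H : HSpace} (x : H) : R := sqrt (Re (hinner H x x)).
Definition hsub {H : HSpace} (x y : H) : H := hadd H x (hopp H y).

Definition converges_to {H : HSpace} (u : nat -> H) (l : H) : Prop :=
  forall eps, 0 < eps -> exists N, forall n, (N <= n)%nat -> hnorm (hsub (u n) l) < eps.

Definition cauchy_seq {H : HSpace} (u : nat -> H) : Prop :=
  forall eps, 0 < eps -> exists N, forall m n, (N <= m)%nat -> (N <= n)%nat ->
    hnorm (hsub (u m) (u n)) < eps.

Definition hilbert_axioms (H : HSpace) : Prop :=
  (forall x y z : H, hadd H x (hadd H y z) = hadd H (hadd H x y) z) /\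
  (forall x y : H, hadd H x y = hadd H y x) /\
  (forall x : H, hadd H x (hzero H) = x) /\
  (forall x : H, hadd H x (hopp H x) = hzero H) /\
  (forall x : H, hscal H C1 x = x) /\
  (forall (a b : C) (x : H), hscal H a (hscal H b x) = hscal H (Cmult a b) x) /\
  (forall (a : C) (x y : H), hscal H a (hadd H x y) = hadd H (hscal H a x) (hscal H a y)) /\
  (forall (a b : C) (x : H), hscal H (Cplus a b) x = hadd H (hscal H a x) (hscal H b x)) /\
  (forall x y z : H, hinner H (hadd H x y) z = Cplus (hinner H x z) (hinner H y z)) /\
  (forall (a : C) (x y : H), hinner H (hscal H a x) y = Cmult a (hinner H x y)) /\
  (forall x y : H, hinner H y x = Cconj (hinner H x y)) /\
  (forall x : H, 0 <= Re (hinner H x x)) /\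
  (forall x : H, hinner H x x = C0 -> x = hzero H) /\
  (forall u : nat -> H, cauchy_seq u -> exists l, converges_to u l).

Record Hilbert := { hspace :> HSpace; hilbert_ax : hilbert_axioms hspace }.

Record AlgOps := {
  acar :> Type;
  aadd : acar -> acar -> acar;
  azero : acar;
  aopp : acar -> acar;
  ascal : C -> acar -> acar;
  amul : acar -> acar -> acar;
  aone : acar;
  astar : acar -> acar
}.

Definition star_alg_axioms (A : AlgOps) : Prop :=
  (forall x y z : A, aadd A x (aadd A y z) = aadd A (aadd A x y) z) /\
  (forall x y : A, aadd A x y = aadd A y x) /\
  (forall x : A, aadd A x (azero A) = x) /\
  (forall x : A, aadd A x (aopp A x) = azero A) /\
  (forall x : A, ascal A C1 x = x) /\
  (forall (a b : C) (x : A), ascal A a (ascal A b x) = ascal A (Cmult a b) x) /\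
  (forall (a : C) (x y : A), ascal A a (aadd A x y) = aadd A (ascal A a x) (ascal A a y)) /\
  (forall (a b : C) (x : A), ascal A (Cplus a b) x = aadd A (ascal A a x) (ascal A b x)) /\
  (forall x y z : A, amul A x (amul A y z) = amul A (amul A x y) z) /\
  (forall x : A, amul A (aone A) x = x) /\
  (forall x : A, amul A x (aone A) = x) /\
  (forall x y z : A, amul A x (aadd A y z) = aadd A (amul A x y) (amul A x z)) /\
  (forall x y z : A, amul A (aadd A x y) z = aadd A (amul A x z) (amul A y z)) /\
  (forall (a : C) (x y : A), amul A (ascal A a x) y = ascal A a (amul A x y)) /\
  (forall (a : C) (x y : A), amul A x (ascal A a y) = ascal A a (amul A x y)) /\
  (forall x : A, astar A (astar A x) = x) /\
  (forall x y : A, astar A (aadd A x y) = aadd A (astar A x) (astar A y)) /\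
  (forall x y : A, astar A (amul A x y) = amul A (astar A y) (astar A x)) /\
  (forall (a : C) (x : A), astar A (ascal A a x) = ascal A (Cconj a) (astar A x)).

Record StarAlg := { salg :> AlgOps; salg_ax : star_alg_axioms salg }.

(* ||a|_V|| <= M, unfolded *)
Definition op_norm_le {H : HSpace} (f : H -> H) (M : R) : Prop :=
  forall v : H, hnorm (f v) <= M * hnorm v.

Definition urep_axioms (A : StarAlg) (H : Hilbert) (act : A -> H -> H) : Prop :=
  (forall (a b : A) (v : H), act (aadd A a b) v = hadd H (act a v) (act b v)) /\
  (forall (a : A) (u v : H), act a (hadd H u v) = hadd H (act a u) (act a v)) /\
  (forall (c : C) (a : A) (v : H), act (ascal A c a) v = hscal H c (act a v)) /\
  (forall (c : C) (a : A) (v : H), act a (hscal H c v) = hscal H c (act a v)) /\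
  (forall (a b : A) (v : H), act (amul A a b) v = act a (act b v)) /\
  (forall v : H, act (aone A) v = v) /\
  (forall (a : A) (u v : H), hinner H (act a u) v = hinner H u (act (astar A a) v)) /\
  (forall a : A, exists M, op_norm_le (act a) M).

Record URep (A : StarAlg) := {
  rsp :> Hilbert;
  ract : A -> rsp -> rsp;
  rax : urep_axioms A rsp ract
}.
Arguments ract {A} _ _ _.

Definition closed_submodule {A : StarAlg} (V : URep A) (S : V -> Prop) : Prop :=
  S (hzero V) /\
  (forall x y, S x -> S y -> S (hadd V x y)) /\
  (forall c x, S x -> S (hscal V c x)) /\
  (forall a x, S x -> S (ract V a x)) /\
  (forall (u : nat -> V) l, (forall n, S (u n)) -> converges_to u l -> S l).

Definition irreducible {A : StarAlg} (V : URep A) : Prop :=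
  forall S, closed_submodule V S -> (forall x, S x -> x = hzero V) \/ (forall x, S x).

Definition coef {A : StarAlg} (V : URep A) (a : A) (v : V) : C :=
  hinner V (ract V a v) v.

Definition weakly_contained {A : StarAlg} (V V' : URep A) : Prop :=
  forall (v : V) (eps : R) (F : list A), hnorm v = 1 -> 0 < eps ->
    exists v' : V', hnorm v' = 1 /\
      forall a, In a F -> Cmod (Cminus (coef V a v) (coef V' a v')) < eps.

(* Spec_A(V'), as a predicate on (representatives of) points of \hat A *)
Definition Spec {A : StarAlg} (V' : URep A) (U : URep A) : Prop :=
  irreducible U /\ weakly_contained U V'.

Definition N_set {A : StarAlg} (V : URep A) (v : V) (eps : R) (F : list A)
  (U : URep A) : Prop :=
  exists u : U, forall a, In a F -> Cmod (Cminus (coef V a v) (coef U a u)) < eps.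

Definition subbasic {A : StarAlg} (O : URep A -> Prop) : Prop :=
  exists (V : URep A) (v : V) (eps : R) (F : list A),
    irreducible V /\ hnorm v = 1 /\ 0 < eps /\
    forall U, O U <-> N_set V v eps F U.

Definition dual_open {A : StarAlg} (O : URep A -> Prop) : Prop :=
  forall U, irreducible U -> O U ->
    exists Ns : list (URep A -> Prop),
      (forall N, In N Ns -> subbasic N /\ N U) /\
      (forall W, irreducible W -> (forall N, In N Ns -> N W) -> O W).

Definition dual_closed {A : StarAlg} (S : URep A -> Prop) : Prop :=
  dual_open (fun U => ~ S U).

Definition dual_bounded {A : StarAlg} (S : URep A -> Prop) : Prop :=
  forall a : A, exists M : R,
    forall V : URep A, irreducible V -> S V -> op_norm_le (ract V a) M.

(* Boundedness: if V is weakly contained in V', the diagonal coefficients of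
   a* a on unit vectors of V are limits of those on unit vectors of V', and
   <a* a v, v> = |a v|^2, so every bound on a|_V' is a bound on a|_V.
   Closedness: if U is not weakly contained in V', some unit v, eps and F keep
   the coefficients of U at v at distance eps from those of every unit vector
   of V'.  Adding 1 to F, a representation W in the basic neighbourhood of
   (U, v) carries a vector w of norm close to 1, and the normalised w still has
   coefficients close to those of v; so W cannot be weakly contained in V'
   either. *)
From Pilot Require Import Defs.
From Stdlib Require Import Reals List Lra Psatz Classical.
Open Scope R_scope.

Lemma C_ext (a b : Defs.C) : Re a = Re b -> Im a = Im b -> a = b.
Proof. destruct a, b; simpl; intros; subst; reflexivity. Qed.

Lemma Cmod_ge0 z : 0 <= Cmod z.
Proof. apply sqrt_pos. Qed.

Lemma Rabs_Re_le_Cmod z : Rabs (Re z) <= Cmod z.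
Proof.
  unfold Cmod. rewrite <- sqrt_Rsqr_abs. apply sqrt_le_1_alt. unfold Rsqr. nra.
Qed.

Lemma Cmod_triangle x y : Cmod (Cplus x y) <= Cmod x + Cmod y.
Proof.
  destruct x as [x1 x2], y as [y1 y2]; unfold Cmod, Cplus; simpl.
  set (X := x1 * x1 + x2 * x2); set (Y := y1 * y1 + y2 * y2).
  assert (HX : 0 <= X) by (unfold X; nra).
  assert (HY : 0 <= Y) by (unfold Y; nra).
  pose proof (sqrt_sqrt X HX); pose proof (sqrt_sqrt Y HY).
  pose proof (sqrt_pos X); pose proof (sqrt_pos Y).
  assert (Cauchy_Schwarz : x1 * y1 + x2 * y2 <= sqrt X * sqrt Y).
  { assert (Hsq : (x1 * y1 + x2 * y2) * (x1 * y1 + x2 * y2)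
                  <= (sqrt X * sqrt Y) * (sqrt X * sqrt Y)).
    { replace ((sqrt X * sqrt Y) * (sqrt X * sqrt Y))
        with ((sqrt X * sqrt X) * (sqrt Y * sqrt Y)) by ring.
      rewrite H, H0; unfold X, Y.
      pose proof (Rle_0_sqr (x1 * y2 - x2 * y1)) as Hsq; unfold Rsqr in Hsq. nra. }
    assert (0 <= sqrt X * sqrt Y) by nra. nra. }
  rewrite <- (sqrt_Rsqr (sqrt X + sqrt Y)) by lra.
  apply sqrt_le_1_alt; unfold Rsqr.
  replace ((x1 + y1) * (x1 + y1) + (x2 + y2) * (x2 + y2))
    with (X + Y + 2 * (x1 * y1 + x2 * y2)) by (unfold X, Y; ring).
  nra.
Qed.

Lemma Cmod_sub_triangle x y z :
  Cmod (Cminus x z) <= Cmod (Cminus x y) + Cmod (Cminus y z).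
Proof.
  replace (Cminus x z) with (Cplus (Cminus x y) (Cminus y z)).
  - apply Cmod_triangle.
  - destruct x, y, z; apply C_ext; simpl; ring.
Qed.

Lemma Cmod_mult_real t z : Cmod (Cmult (mkC t 0) z) = Rabs t * Cmod z.
Proof.
  destruct z as [a b]; unfold Cmod, Cmult; simpl.
  match goal with |- sqrt ?e = _ => replace e with ((t * t) * (a * a + b * b)) by ring end.
  rewrite sqrt_mult_alt, <- sqrt_Rsqr_abs by nra. reflexivity.
Qed.

Lemma Cmod_sub_mult_real t z :
  Cmod (Cminus z (Cmult (mkC t 0) z)) = Rabs (1 - t) * Cmod z.
Proof.
  rewrite <- Cmod_mult_real. f_equal. destruct z; apply C_ext; simpl; ring.
Qed.

Lemma Cmod_sub_diag z : Cmod (Cminus z z) = 0.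
Proof.
  replace (Cminus z z) with C0 by (destruct z; apply C_ext; simpl; ring).
  unfold Cmod; simpl. replace (0 * 0 + 0 * 0) with 0 by ring. apply sqrt_0.
Qed.

Section HilbertSpace.
Variable H : Hilbert.

Lemma hadd0r (x : H) : hadd H x (hzero H) = x.
Proof. now destruct (hilbert_ax H) as (_&_&E&_). Qed.

Lemma hinnerDl (x y z : H) :
  hinner H (hadd H x y) z = Cplus (hinner H x z) (hinner H y z).
Proof. now destruct (hilbert_ax H) as (_&_&_&_&_&_&_&_&E&_). Qed.

Lemma hinnerZl (c : Defs.C) (x y : H) : hinner H (hscal H c x) y = Cmult c (hinner H x y).
Proof. now destruct (hilbert_ax H) as (_&_&_&_&_&_&_&_&_&E&_). Qed.

Lemma hinner_conj (x y : H) : hinner H y x = Cconj (hinner H x y).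
Proof. now destruct (hilbert_ax H) as (_&_&_&_&_&_&_&_&_&_&E&_). Qed.

Lemma Re_hinner_self_ge0 (x : H) : 0 <= Re (hinner H x x).
Proof. now destruct (hilbert_ax H) as (_&_&_&_&_&_&_&_&_&_&_&E&_). Qed.

Lemma hinner_self_eq0 (x : H) : hinner H x x = C0 -> x = hzero H.
Proof. destruct (hilbert_ax H) as (_&_&_&_&_&_&_&_&_&_&_&_&E&_). apply E. Qed.

Lemma hinner0l (y : H) : hinner H (hzero H) y = C0.
Proof.
  pose proof (hinnerDl (hzero H) (hzero H) y) as E. rewrite hadd0r in E.
  destruct (hinner H (hzero H) y) as [p q]; injection E; intros.
  apply C_ext; simpl; lra.
Qed.

Lemma hinner0r (y : H) : hinner H y (hzero H) = C0.
Proof. rewrite hinner_conj, hinner0l. apply C_ext; simpl; lra. Qed.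

Lemma Im_hinner_self (x : H) : Im (hinner H x x) = 0.
Proof.
  pose proof (hinner_conj x x) as E. destruct (hinner H x x) as [p q].
  injection E; simpl; lra.
Qed.

Lemma hnorm_ge0 (x : H) : 0 <= hnorm x.
Proof. apply sqrt_pos. Qed.

Lemma hnorm_sq (x : H) : hnorm x * hnorm x = Re (hinner H x x).
Proof. apply sqrt_sqrt, Re_hinner_self_ge0. Qed.

Lemma hnorm_eq0 (x : H) : hnorm x = 0 -> x = hzero H.
Proof.
  intro E. apply hinner_self_eq0. apply sqrt_eq_0 in E; [|apply Re_hinner_self_ge0].
  pose proof (Im_hinner_self x). destruct (hinner H x x); simpl in *.
  apply C_ext; simpl; assumption.
Qed.

Lemma hinnerZr_real (t : R) (x y : H) :
  hinner H x (hscal H (mkC t 0) y) = Cmult (mkC t 0) (hinner H x y).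
Proof.
  rewrite hinner_conj, hinnerZl, (hinner_conj y x).
  destruct (hinner H x y); apply C_ext; simpl; ring.
Qed.

Lemma hnorm_scal_real (t : R) (x : H) :
  hnorm (hscal H (mkC t 0) x) = Rabs t * hnorm x.
Proof.
  unfold hnorm. rewrite hinnerZl, hinnerZr_real.
  pose proof (Im_hinner_self x). destruct (hinner H x x) as [p q]; simpl in *; subst q.
  match goal with |- sqrt ?e = _ => replace e with ((t * t) * p) by ring end.
  rewrite sqrt_mult_alt, <- sqrt_Rsqr_abs by nra. reflexivity.
Qed.

Lemma hnorm_normalize (x : H) :
  0 < hnorm x -> hnorm (hscal H (mkC (/ hnorm x) 0) x) = 1.
Proof.
  intro Hx. rewrite hnorm_scal_real, Rabs_pos_eq by (left; apply Rinv_0_lt_compat, Hx).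
  field. lra.
Qed.

End HilbertSpace.

Lemma astar_involutive (A : StarAlg) (a : A) : astar A (astar A a) = a.
Proof. now destruct (salg_ax A) as (_&_&_&_&_&_&_&_&_&_&_&_&_&_&_&E&_). Qed.

Section Representation.
Variables (A : StarAlg) (V : URep A).

Lemma ract_scal (c : Defs.C) (a : A) (v : V) : ract V a (hscal V c v) = hscal V c (ract V a v).
Proof. now destruct (rax _ V) as (_&_&_&E&_). Qed.

Lemma ract_mul (a b : A) (v : V) : ract V (amul A a b) v = ract V a (ract V b v).
Proof. now destruct (rax _ V) as (_&_&_&_&E&_). Qed.

Lemma ract_one (v : V) : ract V (aone A) v = v.
Proof. now destruct (rax _ V) as (_&_&_&_&_&E&_). Qed.

Lemma ract_adjoint (a : A) (u v : V) :
  hinner V (ract V a u) v = hinner V u (ract V (astar A a) v).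
Proof. now destruct (rax _ V) as (_&_&_&_&_&_&E&_). Qed.

Lemma ract_bounded (a : A) : exists M, op_norm_le (ract V a) M.
Proof. now destruct (rax _ V) as (_&_&_&_&_&_&_&E). Qed.

Lemma coef_scal_real (a : A) (t : R) (v : V) :
  coef V a (hscal V (mkC t 0) v) = Cmult (mkC (t * t) 0) (coef V a v).
Proof.
  unfold coef. rewrite ract_scal, hinnerZl, hinnerZr_real.
  destruct (hinner V (ract V a v) v); apply C_ext; simpl; ring.
Qed.

Lemma Re_coef_star_mul (a : A) (v : V) :
  Re (coef V (amul A (astar A a) a) v) = hnorm (ract V a v) * hnorm (ract V a v).
Proof.
  unfold coef. rewrite ract_mul, ract_adjoint, astar_involutive, hnorm_sq.
  reflexivity.
Qed.

Lemma coef_one (v : V) : coef V (aone A) v = hinner V v v.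
Proof. unfold coef. rewrite ract_one. reflexivity. Qed.

Lemma coef0 (a : A) : coef V a (hzero V) = C0.
Proof. apply hinner0r. Qed.

Lemma op_norm_le_of_unit (a : A) (M : R) :
  (forall v : V, hnorm v = 1 -> hnorm (ract V a v) <= M) -> op_norm_le (ract V a) M.
Proof.
  intros Hunit v. pose proof (hnorm_ge0 _ v) as Hv0.
  destruct (Req_dec (hnorm v) 0) as [E|E].
  - assert (Hzero : hnorm (ract V a v) * hnorm (ract V a v) = 0).
    { rewrite <- Re_coef_star_mul, (hnorm_eq0 _ v E), coef0. reflexivity. }
    rewrite E. pose proof (hnorm_ge0 _ (ract V a v)). nra.
  - pose proof (Hunit _ (hnorm_normalize _ v ltac:(lra))) as Hw.
    set (r := hnorm v) in *.
    rewrite ract_scal, hnorm_scal_real, Rabs_pos_eq in Hw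
      by (left; apply Rinv_0_lt_compat; lra).
    apply (Rmult_le_compat_l r) in Hw; [|lra].
    rewrite <- Rmult_assoc, Rinv_r, Rmult_1_l in Hw by lra. lra.
Qed.

End Representation.

Lemma Rle_of_sqr_approx (x M : R) :
  0 <= M -> (forall eps, 0 < eps -> x * x < M * M + eps) -> x <= M.
Proof.
  intros HM Happrox. apply Rnot_lt_le. intro Hlt.
  specialize (Happrox (x * x - M * M) ltac:(nra)). lra.
Qed.

Lemma list_bound {T : Type} (f : T -> R) (F : list T) :
  exists K, 0 <= K /\ forall a, In a F -> f a <= K.
Proof.
  induction F as [|x F [K [HK0 HK]]].
  - exists 0. split; [lra | intros _ []].
  - exists (Rmax (f x) K). split; [apply (Rle_trans _ K); [lra | apply Rmax_r]|].
    intros a [<-|Ha]; [apply Rmax_l|]. apply (Rle_trans _ K); [auto | apply Rmax_r].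
Qed.

Section WeakContainment.
Variable A : StarAlg.

Lemma weakly_contained_op_norm_le (V V' : URep A) (a : A) (M : R) :
  weakly_contained V V' -> op_norm_le (ract V' a) M -> op_norm_le (ract V a) M.
Proof.
  intros HWC HM. apply op_norm_le_of_unit. intros v Hv.
  set (b := amul A (astar A a) a).
  assert (Approx : forall eps, 0 < eps ->
    0 <= M /\ hnorm (ract V a v) * hnorm (ract V a v) < M * M + eps).
  { intros eps Heps. destruct (HWC v eps (b :: nil) Hv Heps) as [v' [Hv' Hc]].
    specialize (Hc b (or_introl eq_refl)).
    pose proof (Rle_lt_trans _ _ _ (Rabs_Re_le_Cmod _) Hc) as HRe.
    unfold Cminus, Cplus, Copp in HRe; simpl in HRe.
    unfold b in HRe; rewrite !Re_coef_star_mul in HRe.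
    apply Rabs_def2 in HRe.
    pose proof (HM v') as HMv'. rewrite Hv' in HMv'.
    pose proof (hnorm_ge0 _ (ract V' a v')). split; nra. }
  apply Rle_of_sqr_approx; [apply (Approx 1); lra |].
  intros eps Heps; apply Approx, Heps.
Qed.

Lemma dual_bounded_Spec (V' : URep A) : dual_bounded (Spec V').
Proof.
  intro a. destruct (ract_bounded _ V' a) as [M HM].
  exists M. intros V _ [_ HWC]. exact (weakly_contained_op_norm_le _ _ _ _ HWC HM).
Qed.

Lemma not_weakly_contained (U V' : URep A) :
  ~ weakly_contained U V' ->
  exists (v : U) (eps : R) (F : list A), hnorm v = 1 /\ 0 < eps /\
    forall v' : V', hnorm v' = 1 -> exists a, In a F /\
      eps <= Cmod (Cminus (coef U a v) (coef V' a v')).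
Proof.
  intro HnW. apply NNPP; intro Hn; apply HnW; intros v eps F Hv He.
  apply NNPP; intro Hn2; apply Hn; exists v, eps, F; split; [|split]; auto.
  intros v' Hv'; apply NNPP; intro Hn3; apply Hn2; exists v'; split; auto.
  intros a Ha; apply Rnot_le_lt; intro; apply Hn3; exists a; auto.
Qed.

Lemma N_set_unit_approx (U W : URep A) (v : U) (d : R) (F : list A) :
  hnorm v = 1 -> 0 < d <= 1/2 -> N_set U v d (aone A :: F) W ->
  exists w : W, hnorm w = 1 /\ forall a, In a F ->
    Cmod (Cminus (coef U a v) (coef W a w)) <= 2 * d * (Cmod (coef U a v) + 1).
Proof.
  intros Hv Hd [w Hw].
  pose proof (Hw (aone A) (or_introl eq_refl)) as Hw1. rewrite !coef_one in Hw1.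
  pose proof (Rle_lt_trans _ _ _ (Rabs_Re_le_Cmod _) Hw1) as HRe.
  unfold Cminus, Cplus, Copp in HRe; simpl in HRe.
  rewrite <- !hnorm_sq, Hv in HRe. apply Rabs_def2 in HRe.
  set (s := hnorm w * hnorm w) in *.
  assert (Hs : 1/2 < s) by lra.
  pose proof (hnorm_ge0 _ w).
  assert (Hpos : 0 < hnorm w) by (unfold s in *; nra).
  exists (hscal W (mkC (/ hnorm w) 0) w). split; [apply hnorm_normalize, Hpos|].
  intros a Ha. specialize (Hw a (or_intror Ha)).
  rewrite coef_scal_real, <- Rinv_mult. fold s.
  set (cU := coef U a v) in *; set (cW := coef W a w) in *.
  assert (HcW : Cmod cW <= Cmod cU + d).
  { pose proof (Cmod_sub_triangle C0 cU cW) as Htri.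
    replace (Cminus C0 cW) with (Cmult (mkC (-1) 0) cW) in Htri
      by (destruct cW; apply C_ext; simpl; ring).
    replace (Cminus C0 cU) with (Cmult (mkC (-1) 0) cU) in Htri
      by (destruct cU; apply C_ext; simpl; ring).
    rewrite !Cmod_mult_real in Htri.
    replace (Rabs (-1)) with 1 in Htri by (rewrite Rabs_left; lra). lra. }
  assert (Hfactor : Rabs (1 - / s) <= 2 * d).
  { replace (1 - / s) with ((s - 1) * / s) by (field; lra).
    assert (0 < / s < 2).
    { split; [apply Rinv_0_lt_compat; lra|].
      replace 2 with (/ (1/2)) by field. apply Rinv_lt_contravar; lra. }
    rewrite Rabs_mult, (Rabs_pos_eq (/ s)) by lra.
    assert (Rabs (s - 1) <= d) by (apply Rabs_le; lra).
    pose proof (Rabs_pos (s - 1)). nra. }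
  eapply Rle_trans; [apply Cmod_sub_triangle with (y := cW)|].
  rewrite Cmod_sub_mult_real.
  pose proof (Cmod_ge0 cW); pose proof (Rabs_pos (1 - / s)). nra.
Qed.

Lemma dual_closed_Spec (V' : URep A) : dual_closed (Spec V').
Proof.
  intros U HU HnS.
  assert (HnW : ~ weakly_contained U V') by (intro; apply HnS; split; assumption).
  destruct (not_weakly_contained _ _ HnW) as (v & eps & F & Hv & He & Hfar).
  destruct (list_bound (fun a => Cmod (coef U a v)) F) as [K [HK0 HK]].
  set (d := Rmin (1/2) (eps / (4 * (K + 1)))).
  assert (Hd : 0 < d <= 1/2).
  { split; [apply Rmin_glb_lt; [lra | apply Rdiv_lt_0_compat; lra] | apply Rmin_l]. }
  assert (Hdeps : d * (4 * (K + 1)) <= eps).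
  { pose proof (Rmin_r (1/2) (eps / (4 * (K + 1)))) as Hdr. fold d in Hdr.
    apply (Rmult_le_compat_r (4 * (K + 1))) in Hdr; [|lra].
    unfold Rdiv in Hdr. rewrite Rmult_assoc, Rinv_l, Rmult_1_r in Hdr by lra. exact Hdr. }
  exists (N_set U v d (aone A :: F) :: nil). split.
  - intros N [<-|[]]. split.
    + exists U, v, d, (aone A :: F). repeat split; auto; lra.
    + exists v. intros a _. rewrite Cmod_sub_diag. lra.
  - intros W _ HN [_ HWC].
    destruct (N_set_unit_approx _ _ _ _ _ Hv Hd (HN _ (or_introl eq_refl)))
      as [w [Hw Hclose]].
    destruct (HWC w (eps / 2) F Hw ltac:(lra)) as [v' [Hv' Hc]].
    destruct (Hfar v' Hv') as [a [Ha Hge]].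
    specialize (Hc a Ha); specialize (Hclose a Ha); specialize (HK a Ha).
    pose proof (Cmod_sub_triangle (coef U a v) (coef W a w) (coef V' a v')).
    nra.
Qed.

End WeakContainment.

Theorem proposition2p28 (A : StarAlg) (V' : URep A) :
  dual_bounded (Spec V') /\ dual_closed (Spec V').
Proof.
  split; [apply dual_bounded_Spec | apply dual_closed_Spec].
Qed.
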